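(* Let $a,e\in\mathbb{R}$, $\omega>0$, and let $\alpha_i(t)$ ($i=1,\dots,4$) be scalar continuous functions. (i) Suppose $\alpha_3(t)$ is $\omega$-periodic and odd, and $a(a+e)<0$. Then the solution $$x(t)=\sqrt{-a(a+e)}\sin\Big(\int_0^t\alpha_3(s)ds\Big),\ y(t)=\sqrt{-a(a+e)}\cos\Big(\int_0^t\alpha_3(s)ds\Big),\ z(t)=-a$$ of the system $$\begin{aligned}\dot x&=(ax+xz)(1+\alpha_1(t))+x(a+z)\alpha_2(t)+y\alpha_3(t),\\ \dot y&=(ay+yz)(1+\alpha_1(t))+y(a+z)\alpha_2(t)-x\alpha_3(t),\\ \dot z&=(ez-x^2-y^2-z^2)(1+\alpha_1(t)+\alpha_2(t))\end{aligned}$$ is $\omega$-periodic (the period not necessarily minimal). (ii) Suppose $\alpha_3(t)+a^4\alpha_4(t)$ is $\omega$-periodic and odd. Then the solution $$x(t)=a\sin\Big(\int_0^t(\alpha_3(s)+a^4\alpha_4(s))ds\Big),\ y(t)=a\cos\Big(\int_0^t(\alpha_3(s)+a^4\alpha_4(s))ds\Big),\ z(t)=-a$$ of the system $$\begin{aligned}\dot x&=(ax+xz)(1+\alpha_1(t))+x(a+z)\alpha_2(t)+y\alpha_3(t)-y(x^2+y^2)(4az+x^2+y^2+2z^2)\alpha_4(t),\\ \dot y&=(ay+yz)(1+\alpha_1(t))+y(a+z)\alpha_2(t)-x\alpha_3(t)+x(x^2+y^2)(4az+x^2+y^2+2z^2)\alpha_4(t),\\ \dot z&=-(2az+x^2+y^2+z^2)(1+\alpha_1(t)+\alpha_2(t))\end{aligned}$$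 is $\omega$-periodic (the period not necessarily minimal). *)

From Stdlib Require Import Reals.
From Coquelicot Require Export Coquelicot.
Export Reals.
Open Scope R_scope.

Definition periodic (f : R -> R) (w : R) : Prop := forall t, f (t + w) = f t.

Definition odd_fun (f : R -> R) : Prop := forall t, f (- t) = - f t.

(** Both solutions have the form [x = r sin θ], [y = r cos θ], [z = -a] with
    [θ t = ∫_0^t g] for a continuous [g].  Then [x' = y g] and [y' = -x g],
    and since [x² + y² = r²] is constant, each right-hand side collapses to
    exactly these values (for (ii) the [α4]-terms combine to [a⁴ α4 y]
    because [x² + y² = a²] and [z = -a]), while [z' = 0] matches since the
    [z]-equation vanishes on the circle.  Periodicity reduces to that of [θ]:
    a primitive of a periodic odd function [g] is periodic, because
    [∫_0^ω g = ∫_{-ω}^0 g = -∫_0^ω g] by periodicity and then oddness. *)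
From Stdlib Require Import Reals Lra.
From Coquelicot Require Import Coquelicot.
Open Scope R_scope.

Lemma is_derive_eq_value (f : R -> R) (t l l' : R) :
  is_derive f t l -> l = l' -> is_derive f t l'.
Proof. now intros H <-. Qed.

Section PrimitiveOfContinuous.

Variable f : R -> R.
Hypothesis f_cont : forall t, continuous f t.

Lemma ex_RInt_continuous_everywhere a b : ex_RInt f a b.
Proof. apply (@ex_RInt_continuous R_CompleteNormedModule); intros; apply f_cont. Qed.

Lemma is_derive_RInt0 t : is_derive (fun t => RInt f 0 t) t (f t).
Proof.
  apply (is_derive_RInt f _ 0); [|apply f_cont].
  exists (mkposreal 1 Rlt_0_1); intros u _.
  apply (@RInt_correct R_CompleteNormedModule), ex_RInt_continuous_everywhere.
Qed.

Lemma RInt_shift_periodic w a b :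
  periodic f w -> RInt f (a + w) (b + w) = RInt f a b.
Proof.
  intros Hper.
  replace (a + w) with (1 * a + w) by ring; replace (b + w) with (1 * b + w) by ring.
  rewrite <- (@RInt_comp_lin R_CompleteNormedModule) by apply ex_RInt_continuous_everywhere.
  apply RInt_ext; intros u _.
  change (1 * f (1 * u + w) = f u); now rewrite !Rmult_1_l, Hper.
Qed.

Lemma RInt0_opp_odd b : odd_fun f -> RInt f 0 (- b) = RInt f 0 b.
Proof.
  intros Hodd.
  replace (- b) with (-1 * b + 0) by ring; replace 0 with (-1 * 0 + 0) at 1 by ring.
  rewrite <- (@RInt_comp_lin R_CompleteNormedModule) by apply ex_RInt_continuous_everywhere.
  apply RInt_ext; intros u _.
  change (-1 * f (-1 * u + 0) = f u).
  replace (-1 * u + 0) with (- u) by ring; rewrite Hodd; ring.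
Qed.

Lemma RInt_period_odd w : periodic f w -> odd_fun f -> RInt f 0 w = 0.
Proof.
  intros Hper Hodd.
  assert (Hback : RInt f 0 w = RInt f (- w) 0).
  { rewrite <- (RInt_shift_periodic w (- w) 0 Hper); f_equal; ring. }
  assert (Hswap : RInt f (- w) 0 = - RInt f 0 (- w)).
  { rewrite <- (@opp_RInt_swap R_CompleteNormedModule)
      by apply ex_RInt_continuous_everywhere.
    reflexivity. }
  rewrite RInt0_opp_odd in Hswap by exact Hodd.
  lra.
Qed.

Lemma RInt0_periodic w :
  periodic f w -> odd_fun f -> periodic (fun t => RInt f 0 t) w.
Proof.
  intros Hper Hodd t.
  rewrite <- (@RInt_Chasles R_CompleteNormedModule f 0 w (t + w))
    by apply ex_RInt_continuous_everywhere.
  pose proof (RInt_shift_periodic w 0 t Hper) as Hshift; rewrite Rplus_0_l in Hshift.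
  rewrite RInt_period_odd, Hshift by assumption.
  apply Rplus_0_l.
Qed.

End PrimitiveOfContinuous.

Section PolarCurve.

Variables (r : R) (theta dtheta : R -> R).
Hypothesis theta_derive : forall t, is_derive theta t (dtheta t).

Lemma is_derive_polar_sin t :
  is_derive (fun t => r * sin (theta t)) t (r * cos (theta t) * dtheta t).
Proof.
  rewrite Rmult_assoc; apply is_derive_scal.
  apply (is_derive_eq_value _ _ (scal (dtheta t) (cos (theta t)))).
  - apply (is_derive_comp sin theta); [apply is_derive_sin | apply theta_derive].
  - apply Rmult_comm.
Qed.

Lemma is_derive_polar_cos t :
  is_derive (fun t => r * cos (theta t)) t (- (r * sin (theta t) * dtheta t)).
Proof.
  apply (is_derive_eq_value _ _ (r * (dtheta t * - sin (theta t)))).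
  - apply is_derive_scal, (is_derive_comp cos theta);
      [apply is_derive_cos | apply theta_derive].
  - ring.
Qed.

End PolarCurve.

Lemma polar_sin_sq r u : (r * sin u) ^ 2 = r ^ 2 - (r * cos u) ^ 2.
Proof. pose proof (sin2_cos2 u) as H; unfold Rsqr in H; nra. Qed.

Theorem proposition2
  (a e w : R) (alpha1 alpha2 alpha3 alpha4 : R -> R)
  (hw : 0 < w)
  (h1 : forall t, continuous alpha1 t) (h2 : forall t, continuous alpha2 t)
  (h3 : forall t, continuous alpha3 t) (h4 : forall t, continuous alpha4 t) :
  (* part (i) *)
  (periodic alpha3 w -> odd_fun alpha3 -> a * (a + e) < 0 ->
   let x := fun t => sqrt (- (a * (a + e))) * sin (RInt alpha3 0 t) in
   let y := fun t => sqrt (- (a * (a + e))) * cos (RInt alpha3 0 t) in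
   let z := fun _ : R => - a in
   (forall t,
      is_derive x t ((a * x t + x t * z t) * (1 + alpha1 t)
                     + x t * (a + z t) * alpha2 t + y t * alpha3 t) /\
      is_derive y t ((a * y t + y t * z t) * (1 + alpha1 t)
                     + y t * (a + z t) * alpha2 t - x t * alpha3 t) /\
      is_derive z t ((e * z t - x t ^ 2 - y t ^ 2 - z t ^ 2)
                     * (1 + alpha1 t + alpha2 t))) /\
   periodic x w /\ periodic y w /\ periodic z w)
  /\
  (* part (ii) *)
  (periodic (fun t => alpha3 t + a ^ 4 * alpha4 t) w ->
   odd_fun (fun t => alpha3 t + a ^ 4 * alpha4 t) ->
   let x := fun t => a * sin (RInt (fun s => alpha3 s + a ^ 4 * alpha4 s) 0 t) in
   let y := fun t => a * cos (RInt (fun s => alpha3 s + a ^ 4 * alpha4 s) 0 t) in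
   let z := fun _ : R => - a in
   (forall t,
      is_derive x t ((a * x t + x t * z t) * (1 + alpha1 t)
                     + x t * (a + z t) * alpha2 t + y t * alpha3 t
                     - y t * (x t ^ 2 + y t ^ 2)
                       * (4 * a * z t + x t ^ 2 + y t ^ 2 + 2 * z t ^ 2) * alpha4 t) /\
      is_derive y t ((a * y t + y t * z t) * (1 + alpha1 t)
                     + y t * (a + z t) * alpha2 t - x t * alpha3 t
                     + x t * (x t ^ 2 + y t ^ 2)
                       * (4 * a * z t + x t ^ 2 + y t ^ 2 + 2 * z t ^ 2) * alpha4 t) /\
      is_derive z t (- (2 * a * z t + x t ^ 2 + y t ^ 2 + z t ^ 2)
                     * (1 + alpha1 t + alpha2 t))) /\
   periodic x w /\ periodic y w /\ periodic z w).
Proof.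
  split.
  - intros Hper Hodd Hneg x y z.
    pose proof (RInt0_periodic _ h3 w Hper Hodd) as Htheta.
    (* Once [x t ^ 2] is eliminated, the circle relation is built in and [ring] suffices. *)
    assert (Hx2 : forall t, x t ^ 2 = - (a * (a + e)) - y t ^ 2).
    { intros t; unfold x, y; rewrite polar_sin_sq, pow2_sqrt by lra; reflexivity. }
    split; [intros t; split; [|split] | split; [|split]; intros t].
    + eapply is_derive_eq_value;
        [apply (is_derive_polar_sin _ _ _ (is_derive_RInt0 _ h3)) | unfold y, z; ring].
    + eapply is_derive_eq_value;
        [apply (is_derive_polar_cos _ _ _ (is_derive_RInt0 _ h3)) | unfold x, z; ring].
    + apply (is_derive_eq_value _ _ 0); [apply (@is_derive_const R_AbsRing)|].
      rewrite Hx2; unfold z; ring.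
    + unfold x; now rewrite Htheta.
    + unfold y; now rewrite Htheta.
    + reflexivity.
  - intros Hper Hodd x y z.
    set (g := fun s => alpha3 s + a ^ 4 * alpha4 s) in *.
    assert (hg : forall t, continuous g t).
    { intros t; apply (continuous_plus alpha3 (fun s => a ^ 4 * alpha4 s)); [apply h3|].
      apply (continuous_scal_r (a ^ 4) alpha4), h4. }
    pose proof (RInt0_periodic _ hg w Hper Hodd) as Htheta.
    assert (Hx2 : forall t, x t ^ 2 = a ^ 2 - y t ^ 2) by (intros t; apply polar_sin_sq).
    split; [intros t; split; [|split] | split; [|split]; intros t].
    + eapply is_derive_eq_value;
        [apply (is_derive_polar_sin _ _ _ (is_derive_RInt0 _ hg)) |].
      rewrite Hx2; unfold y, z, g; ring.
    + eapply is_derive_eq_value;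
        [apply (is_derive_polar_cos _ _ _ (is_derive_RInt0 _ hg)) |].
      rewrite Hx2; unfold x, y, z, g; ring.
    + apply (is_derive_eq_value _ _ 0); [apply (@is_derive_const R_AbsRing)|].
      rewrite Hx2; unfold z; ring.
    + unfold x; now rewrite Htheta.
    + unfold y; now rewrite Htheta.
    + reflexivity.
Qed.
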